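(* Let $R$ be a finite commutative local ring and $G=\mathrm{GL}_n(R)$. For all $r,t\in W$ with $\ell(t)\le\ell(r)$ and $t\neq r$, one has $ULV\cap t^{-1}Ur=\emptyset$.
   Context: $L$ is the subgroup of diagonal matrices, $U$ the upper unitriangular and $V$ the lower unitriangular matrices in $G$. $W\cong S_n$ is the group of permutation matrices in $G$, and $\ell$ is the word length on $W$ with respect to the generating set of simple transpositions $\{(1\,2),(2\,3),\ldots,(n-1\,n)\}$. $ULV$ denotes the set of products $ulv$ and $t^{-1}Ur$ the set of products $t^{-1}ur$. *)

From HB Require Import structures.
From mathcomp Require Import all_boot all_order all_algebra all_fingroup.
Set Implicit Arguments. Unset Strict Implicit. Unset Printing Implicit Defensive.
Import GRing.Theory.
Local Open Scope ring_scope.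

(* A (commutative, nontrivial) ring is local iff its non-units form an ideal;
   for the additive closure (the only non-automatic part): the sum of two
   non-units is a non-unit. *)
Definition local_ring (R : comUnitRingType) : Prop :=
  forall x y : R, x \notin GRing.unit -> y \notin GRing.unit ->
    x + y \notin GRing.unit.

Definition upper_unitri (R : comUnitRingType) n (A : 'M[R]_n) : Prop :=
  (forall i, A i i = 1) /\ (forall i j : 'I_n, (j < i)%N -> A i j = 0).

Definition lower_unitri (R : comUnitRingType) n (A : 'M[R]_n) : Prop :=
  (forall i, A i i = 1) /\ (forall i j : 'I_n, (i < j)%N -> A i j = 0).

Definition diag_inv (R : comUnitRingType) n (A : 'M[R]_n) : Prop :=
  is_diag_mx A /\ A \in unitmx.

Definition simple_word n (s : 'S_n) (w : seq ('I_n * 'I_n)) : Prop :=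
  all (fun p : 'I_n * 'I_n => (p.2 == p.1.+1 :> nat)) w /\
  s = (\prod_(p <- w) tperm p.1 p.2)%g.

Definition has_word_of_length n (s : 'S_n) (k : nat) : Prop :=
  exists w, simple_word s w /\ size w = k.

Definition perm_length n (s : 'S_n) (k : nat) : Prop :=
  has_word_of_length s k /\ forall m, has_word_of_length s m -> (k <= m)%N.

From HB Require Import structures.
From mathcomp Require Import all_boot all_order all_algebra all_fingroup.
From mathcomp Require Import zify.
Import GRing.Theory.
Set Implicit Arguments. Unset Strict Implicit.

(* If u l v = t^-1 u' r, the entry (i, j) of this matrix is u' (t^-1 i) (r^-1 j).
   Every trailing principal minor of u l v is a unit.  On the other side, if
   #{i >= k | t^-1 i <= m} < #{j >= k | r^-1 j <= m}, every term of the Leibniz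
   expansion of the trailing minor of order n - k meets an entry of u' below the
   diagonal, so that minor vanishes.  Hence the rank function of r^-1 is dominated
   by that of t^-1, i.e. r^-1 <= t^-1 in the Bruhat order, which forces r = t or
   ninv r < ninv t, where the number of inversions ninv is the word length. *)

Section Inversions.
Variable n : nat.
Implicit Types s x y : 'S_n.
Local Open Scope group_scope.

Definition inversions s : {set 'I_n * 'I_n} :=
  [set p : 'I_n * 'I_n | (p.1 < p.2)%N && (s p.2 < s p.1)%N].

Definition ninv s := #|inversions s|.

Lemma ninv1 : ninv 1 = 0%N.
Proof.
apply/eqP; rewrite cards_eq0; apply/eqP/setP => -[i j].
by rewrite !inE /= !perm1; apply/negbTE; lia.
Qed.

Lemma ninv_tperm_desc s (a b : 'I_n) : b = a.+1 :> nat -> (s b < s a)%N ->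
  (ninv (tperm a b * s)).+1 = ninv s.
Proof.
move=> hb hab.
pose f p : 'I_n * 'I_n := (tperm a b p.1, tperm a b p.2).
have f_inj : injective f.
  by move=> [i j] [i' j'] [/(can_inj (tpermK a b)) -> /(can_inj (tpermK a b)) ->].
rewrite /ninv; have -> : inversions (tperm a b * s) = f @^-1: (inversions s :\ (a, b)).
  apply/setP => -[i j]; rewrite !inE /= !permM /f /= xpair_eqE.
  by case: tpermP => [->|->|/eqP + /eqP +]; case: tpermP => [->|->|/eqP + /eqP +];
    rewrite -?val_eqE /=; lia.
by rewrite card_preimset // [RHS](cardsD1 (a, b)) inE /= hb leqnn hab.
Qed.

Lemma ninv_tperm_asc s (a b : 'I_n) : b = a.+1 :> nat -> (s a < s b)%N ->
  ninv (tperm a b * s) = (ninv s).+1.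
Proof.
move=> hb hab; rewrite -(ninv_tperm_desc hb); last by rewrite !permM tpermL tpermR.
by rewrite mulgA tperm2 mul1g.
Qed.

Lemma ninv_tperm_le s (a b : 'I_n) : b = a.+1 :> nat ->
  (ninv (tperm a b * s) <= (ninv s).+1)%N.
Proof.
move=> hb; case: (ltngtP (s a) (s b)) => [hab|hab|/val_inj/perm_inj eab].
- by rewrite ninv_tperm_asc.
- by rewrite -(ninv_tperm_desc hb hab) leqW.
- by move: hb; rewrite eab; lia.
Qed.

Lemma ninv_le_size_word s w : simple_word s w -> (ninv s <= size w)%N.
Proof.
elim: w s => [|[a b] w IHw] s [/= hw ->]; first by rewrite big_nil ninv1.
move: hw; rewrite big_cons => /andP [/eqP hb hw].
by apply: leq_trans (ninv_tperm_le _ hb) _; rewrite ltnS; apply: IHw.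
Qed.

Lemma perm_ge_id s : (forall i : 'I_n, (i <= s i)%N) -> s = 1.
Proof.
move=> hs; apply/permP => i; rewrite perm1; apply/val_inj/eqP.
rewrite eqn_leq hs andbT leqNgt; apply/negP => hlt.
have : (\sum_(j < n) s j = \sum_(j < n) j)%N.
  by rewrite [RHS](reindex_inj (@perm_inj _ s)).
rewrite (bigD1 i) // [RHS](bigD1 i) //=; apply/eqP.
by rewrite gtn_eqF // -addSn leq_add // leq_sum.
Qed.

Lemma perm1_or_descent s :
  s = 1 \/ exists a b : 'I_n, b = a.+1 :> nat /\ (s b < s a)%N.
Proof.
have [/existsP [a /existsP [b /andP [/eqP hb hab]]]|no_desc] :=
  boolP [exists a : 'I_n, exists b : 'I_n, (b == a.+1 :> nat) && (s b < s a)%N].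
  by right; exists a, b.
left; apply: perm_ge_id.
suff le_s k (i : 'I_n) : i = k :> nat -> (k <= s i)%N by move=> i; apply: le_s.
elim: k i => [//|k IHk] i hi.
have lt_k : (k < n)%N by rewrite -hi ltnW.
have := IHk (Ordinal lt_k) erefl.
move: no_desc; rewrite negb_exists => /forallP /(_ (Ordinal lt_k)).
rewrite negb_exists => /forallP /(_ i); rewrite hi eqxx /= -leqNgt.
have ne_s : nat_of_ord (s (Ordinal lt_k)) != s i.
  by rewrite val_eqE (inj_eq perm_inj) -val_eqE /= hi; lia.
lia.
Qed.

Lemma simple_word_ninv s : exists w, simple_word s w /\ size w = ninv s.
Proof.
move def_m: (ninv s) => m; elim: m s def_m => [|m IHm] s;
  have [->|[a [b [hb hab]]]] := perm1_or_descent s => def_m.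
- by exists [::]; rewrite /simple_word big_nil.
- by move: def_m; rewrite -(ninv_tperm_desc hb hab).
- by move: def_m; rewrite ninv1.
have [|w [[hw def_s] size_w]] := IHm (tperm a b * s).
  by apply/eqP; rewrite -eqSS -def_m (ninv_tperm_desc hb hab).
exists ((a, b) :: w); split; last by rewrite /= size_w.
by split; rewrite /= ?hb ?eqxx // big_cons -def_s mulgA tperm2 mul1g.
Qed.

Lemma perm_length_ninv s k : perm_length s k -> k = ninv s.
Proof.
move=> [[w [hw <-]] min_k]; apply/eqP; rewrite eqn_leq ninv_le_size_word // andbT.
by have [w' hw'] := simple_word_ninv s; apply: min_k; exists w'.
Qed.

Lemma ninvV s : ninv s^-1 = ninv s.
Proof.
suff le_ninvV x : (ninv x <= ninv x^-1)%N.
  by apply/eqP; rewrite eqn_leq le_ninvV -{2}[s]invgK le_ninvV.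
pose g p : 'I_n * 'I_n := (x p.2, x p.1).
have g_inj : injective g by move=> [i j] [i' j'] [/perm_inj -> /perm_inj ->].
rewrite /ninv -(card_imset _ g_inj); apply/subset_leq_card/subsetP => q /imsetP[[i j]].
by rewrite !inE /= => /andP [hij hx] ->; rewrite !permK hij hx.
Qed.

Definition bruhat_rank s (k m : nat) :=
  #|[set i : 'I_n | (k <= i)%N && (s i <= m)%N]|.

Lemma bruhat_rankS s (i : 'I_n) m :
  bruhat_rank s i m = ((s i <= m)%N + bruhat_rank s i.+1 m)%N.
Proof.
rewrite /bruhat_rank (cardsD1 i) inE leqnn /=; congr (_ + _)%N.
by apply: eq_card => j; rewrite !inE -val_eqE /=; case: ltngtP.
Qed.

Lemma bruhat_rank_tperm s (a b : 'I_n) k m : b = a.+1 :> nat -> k != a.+1 ->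
  bruhat_rank (tperm a b * s) k m = bruhat_rank s k m.
Proof.
move=> hb hk; rewrite /bruhat_rank -[RHS](card_preimset _ (@perm_inj _ (tperm a b))).
apply: eq_card => i; rewrite !inE permM.
by case: tpermP => // ->; move: hk; rewrite hb; lia.
Qed.

Lemma bruhat_rank_tperm_desc s (a b : 'I_n) k m : b = a.+1 :> nat ->
  (s b < s a)%N -> (bruhat_rank (tperm a b * s) k m <= bruhat_rank s k m)%N.
Proof.
move=> hb hab; have [->|hk] := eqVneq k a.+1; last by rewrite bruhat_rank_tperm.
rewrite -hb !bruhat_rankS permM tpermR bruhat_rank_tperm // ?hb; lia.
Qed.

(* Only the rank at [k = b] changes; it is bounded using the ranks at [a] and
   [b.+1], because [x a > x b] and [y a < y b]. *)
Lemma bruhat_rank_le_tperm x y (a b : 'I_n) : b = a.+1 :> nat ->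
    (x b < x a)%N -> (y a < y b)%N ->
    (forall k m, bruhat_rank y k m <= bruhat_rank x k m)%N ->
  forall k m, (bruhat_rank y k m <= bruhat_rank (tperm a b * x) k m)%N.
Proof.
move=> hb hx hy le_yx k m.
have [->|hk] := eqVneq k a.+1; last by rewrite bruhat_rank_tperm.
have rank_a s : bruhat_rank s a m = ((s a <= m) + (s b <= m) + bruhat_rank s b.+1 m)%N.
  by rewrite bruhat_rankS -hb bruhat_rankS addnA.
have := le_yx a m; have := le_yx b.+1 m; rewrite !rank_a.
rewrite -hb !bruhat_rankS permM tpermR bruhat_rank_tperm // ?hb; lia.
Qed.

Lemma bruhat_rank_le1 y : (forall k m, bruhat_rank y k m <= bruhat_rank 1 k m)%N -> y = 1.
Proof.
move=> le_y1; apply: perm_ge_id => i; rewrite leqNgt; apply/negP => lt_yi.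
have := le_y1 i (y i); rewrite bruhat_rankS leqnn.
suff -> : bruhat_rank 1 i (y i) = 0%N by [].
apply/eqP; rewrite cards_eq0; apply/eqP/setP => j; rewrite !inE perm1; lia.
Qed.

Lemma bruhat_rank_le_ninv x y :
    (forall k m, bruhat_rank y k m <= bruhat_rank x k m)%N ->
  y = x \/ (ninv y < ninv x)%N.
Proof.
move def_m: (ninv x) => m; elim/ltn_ind: m x y def_m => m IHm x y def_m le_yx.
have [x1|[a [b [hb hx]]]] := perm1_or_descent x.
  by left; rewrite x1; apply: bruhat_rank_le1; rewrite -x1.
have lt_m : (ninv (tperm a b * x) < m)%N by rewrite -def_m -(ninv_tperm_desc hb hx).
rewrite -def_m -(ninv_tperm_desc hb hx) ltnS.
case: (ltngtP (y a) (y b)) => [hy|hy|/val_inj/perm_inj eab];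
  last by move: hb; rewrite eab; lia.
- have [->|lt] := IHm _ lt_m _ _ erefl (bruhat_rank_le_tperm hb hx hy le_yx).
    by right.
  by right; apply: ltnW.
- have hy' : ((tperm a b * y)%g a < (tperm a b * y)%g b)%N.
    by rewrite !permM tpermL tpermR.
  have le_y'x k m' : (bruhat_rank (tperm a b * y)%g k m' <= bruhat_rank x k m')%N.
    exact: leq_trans (bruhat_rank_tperm_desc k m' hb hy) (le_yx k m').
  have [e|lt] := IHm _ lt_m _ _ erefl (bruhat_rank_le_tperm hb hx hy' le_y'x).
    by left; apply: (mulgI (tperm a b)).
  by right; rewrite -(ninv_tperm_desc hb hy).
Qed.

End Inversions.

Local Open Scope ring_scope.

Section CornerMinors.
Variables (R : comUnitRingType) (n : nat).
Implicit Types A B u l v : 'M[R]_n.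

(* Identity on the first k rows and columns and A on the trailing block: its
   determinant is the trailing principal minor of A of order n - k. *)
Definition corner_mx k A : 'M[R]_n :=
  \matrix_(i, j) if (i < k)%N || (j < k)%N then (i == j)%:R else A i j.

Lemma trmx_corner k A : (corner_mx k A)^T = corner_mx k A^T.
Proof. by apply/matrixP => i j; rewrite !mxE orbC eq_sym. Qed.

Lemma upper_unitri_trig u : upper_unitri u -> is_trig_mx u^T.
Proof. by move=> [_ u_up]; apply/is_trig_mxP => i j lt_ij; rewrite mxE u_up. Qed.

Lemma corner_mxM k A B : is_trig_mx A^T ->
  corner_mx k (A *m B) = corner_mx k A *m corner_mx k B.
Proof.
move=> /is_trig_mxP A_up; apply/matrixP => i j; rewrite !mxE.
have [lt_ik|le_ki] /= := ltnP i k.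
  rewrite (bigD1 i) //= big1 => [|c ne_ci].
    by rewrite !mxE lt_ik eqxx mul1r addr0.
  by rewrite mxE lt_ik eq_sym (negPf ne_ci) mul0r.
have [lt_jk|le_kj] /= := ltnP j k.
  rewrite (bigD1 j) //= big1 => [|c ne_cj].
    by rewrite !mxE lt_jk orbT eqxx mulr1 addr0.
  by rewrite [corner_mx k B c j]mxE lt_jk orbT (negPf ne_cj) mulr0.
apply: eq_bigr => c _; rewrite !mxE ![(_ < k)%N]ltnNge le_ki le_kj /=.
have [//|lt_ck] := leqP k c; have lt_ci := leq_trans lt_ck le_ki.
by have := A_up c i lt_ci; rewrite mxE => ->; rewrite -val_eqE /= gtn_eqF // !mul0r.
Qed.

Lemma det_corner_trig k A : is_trig_mx A ->
  \det (corner_mx k A) = \prod_(i < n | (k <= i)%N) A i i.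
Proof.
move=> /is_trig_mxP A_low; rewrite det_trig; last first.
  apply/is_trig_mxP => i j lt_ij; rewrite mxE A_low //.
  by rewrite -val_eqE /= ltn_eqF // if_same.
rewrite [RHS]big_mkcond; apply: eq_bigr => i _; rewrite mxE eqxx orbb.
by case: ltnP.
Qed.

Lemma det_corner_LDU_unit k u l v :
  upper_unitri u -> diag_inv l -> lower_unitri v ->
  \det (corner_mx k (u *m l *m v)) \is a GRing.unit.
Proof.
move=> hu [l_diag l_unit] [v1 v_low].
have lv_E i j : (l *m v) i j = l i i * v i j.
  rewrite mxE (bigD1 i) //= big1 ?addr0 // => c ne_ci.
  by rewrite (is_diag_mxP l_diag) ?mul0r // eq_sym.
have lv_low : is_trig_mx (l *m v).
  by apply/is_trig_mxP => i j lt_ij; rewrite lv_E v_low ?mulr0.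
have l_ii i : l i i \is a GRing.unit.
  move: l_unit; rewrite unitmxE det_trig ?is_diag_mx_is_trig //.
  by rewrite (bigD1 i) //= unitrM => /andP [].
rewrite -mulmxA corner_mxM ?upper_unitri_trig // det_mulmx.
rewrite -det_tr trmx_corner !det_corner_trig ?upper_unitri_trig //.
rewrite big1 ?mul1r => [|i _]; last by rewrite mxE hu.1.
by apply: unitr_prod => i _; rewrite lv_E v1 mulr1.
Qed.

Lemma det_corner_perm_eq0 k m A (x y : 'S_n) : is_trig_mx A^T ->
    (bruhat_rank x k m < bruhat_rank y k m)%N ->
  \det (corner_mx k (\matrix_(i, j) A (x i) (y j))) = 0.
Proof.
move=> /is_trig_mxP A_up lt_rank; rewrite /determinant; apply: big1 => s _.
set S := [set j : 'I_n | (k <= j)%N && (y j <= m)%N].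
set T := [set i : 'I_n | (k <= i)%N && (x i <= m)%N].
have /subsetPn [i] : ~~ (s @^-1: S \subset T).
  apply: contraL lt_rank => /subset_leq_card.
  by rewrite card_preimset -?leqNgt //; apply: perm_inj.
rewrite !inE => /andP [le_ksi le_ysi_m] not_Ti.
rewrite (bigD1 i) //= !mxE.
have [lt_ik|le_ki] /= := ltnP i k.
  by rewrite -val_eqE /= ltn_eqF ?mul0r ?mulr0 //; apply: leq_trans le_ksi.
rewrite ltnNge le_ksi /=; have := A_up (y (s i)) (x i); rewrite mxE => -> //.
  by rewrite mul0r mulr0.
apply: leq_ltn_trans le_ysi_m _; rewrite ltnNge.
by apply: contra not_Ti => ->; rewrite le_ki.
Qed.

Lemma bruhat_rank_le_of_LDU u l v A (x y : 'S_n) :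
    upper_unitri u -> diag_inv l -> lower_unitri v -> is_trig_mx A^T ->
    u *m l *m v = \matrix_(i, j) A (x i) (y j) ->
  forall k m, (bruhat_rank y k m <= bruhat_rank x k m)%N.
Proof.
move=> hu hl hv A_up def_M k m; rewrite leqNgt; apply/negP => lt_rank.
have := det_corner_LDU_unit k hu hl hv.
by rewrite def_M (det_corner_perm_eq0 A_up lt_rank) unitr0.
Qed.

Lemma invmx_perm_mulmxE (s s' : 'S_n) A :
  invmx (perm_mx s) *m A *m perm_mx s' = \matrix_(i, j) A (s^-1%g i) (s'^-1%g j).
Proof.
have -> : invmx (perm_mx s) = perm_mx s^-1 :> 'M[R]_n.
  by rewrite -[LHS]mulmx1 -perm_mx1 -(mulgV s) perm_mxM mulmxA mulVmx ?unitmx_perm ?mul1mx.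
by apply/matrixP => i j; rewrite -row_permE -[s' in perm_mx s']invgK -col_permE !mxE.
Qed.

End CornerMinors.

Theorem proposition3p2 (R : finComUnitRingType) (hR : local_ring R) (n : nat)
    (r t : 'S_n) (lr lt : nat) :
  perm_length r lr -> perm_length t lt -> (lt <= lr)%N ->
  perm_mx t != perm_mx r :> 'M[R]_n ->
  ~ (exists (u l v u' : 'M[R]_n),
       [/\ upper_unitri u, diag_inv l, lower_unitri v, upper_unitri u' &
           u *m l *m v = invmx (perm_mx t) *m u' *m perm_mx r]).
Proof.
move=> /perm_length_ninv -> /perm_length_ninv -> le_tr ne_tr.
case=> u [l [v [u' [hu hl hv hu' def_M]]]].
rewrite invmx_perm_mulmxE in def_M.
have [/(congr1 invg)|] :=
  bruhat_rank_le_ninv (bruhat_rank_le_of_LDU hu hl hv (upper_unitri_trig hu') def_M).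
  by rewrite !invgK => eq_rt; rewrite eq_rt eqxx in ne_tr.
by rewrite !ninvV ltnNge le_tr.
Qed.
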